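(* Fix $u_{\max}>0$, $u^*\in[0,u_{\max}]$, $u_a\in[0,u_{\max}]$, $C\ge0$, and consider the problem (P2): $\min_{z\in\mathcal C_b}\{z^2: q(z)\le -C\}$ where $q(z)=g(u_a,z)$. Then $q'(z)=\frac1{\hat u}(z-u^* )(z-\hat u)$. Let $m=\frac{2u^*+u_{\max}}4$ and $\gamma=\max\{u^*,\hat u\}$. (i) If $u^*\ne\hat u$: if $-C\ge q(m)$, the optimal solution of (P2) is $z=m$; if $q(\gamma)\le -C<q(m)$, the optimal solution is the smallest root of $q(z)=-C$ in $(m,u_{\max}]$; if $-C<q(\gamma)$, (P2) is infeasible. (ii) If $u^*=\hat u$: if $-C\ge q(m)$, the optimal solution is $z=m$; if $-C<q(m)$, (P2) is infeasible.
   Context: $f(u)=u(1-u/u_{\max})$ on $[0,u_{\max}]$, $\hat u=u_{\max}/2$ its unique maximizer, $F$ a primitive of $f$, $g(s,z)=(s-u^* )f(s)-(z-u^* )f(z)-F(s)+F(z)$, and $\mathcal C_b=[\frac{2u^*+u_{\max}}4,u_{\max}]$. *)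

From Stdlib Require Import Reals.
From Coquelicot Require Import Coquelicot.
Open Scope R_scope.

Definition f (umax u : R) : R := u * (1 - u / umax).
(* a primitive of f (g does not depend on the choice of constant) *)
Definition F (umax u : R) : R := u ^ 2 / 2 - u ^ 3 / (3 * umax).
(* unique maximizer of f *)
Definition uhat (umax : R) : R := umax / 2.
Definition g (umax ustar s z : R) : R :=
  (s - ustar) * f umax s - (z - ustar) * f umax z - F umax s + F umax z.
Definition in_Cb (umax ustar z : R) : Prop :=
  (2 * ustar + umax) / 4 <= z <= umax.

Definition P2_feasible (umax ustar ua C z : R) : Prop :=
  in_Cb umax ustar z /\ g umax ustar ua z <= - C.

Definition P2_optimal (umax ustar ua C z : R) : Prop :=
  P2_feasible umax ustar ua C z /\
  forall w, P2_feasible umax ustar ua C w -> w <> z -> z ^ 2 < w ^ 2.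

Definition P2_infeasible (umax ustar ua C : R) : Prop :=
  ~ (exists z, P2_feasible umax ustar ua C z).

(* q' z = (z - u* )(z - û)/û, so q decreases strictly between u* and û and
   increases beyond gamma = max(u*, û).  The left end m of C_b is the midpoint
   of u* and û, hence q attains its minimum over C_b at gamma, which settles
   infeasibility.  The objective z^2 is increasing on C_b, so the optimum is the
   least feasible point: m itself if q m <= -C, and otherwise the first crossing
   of the level -C, which the intermediate value theorem places in (m, gamma]. *)
From Pilot Require Import Defs.
From Stdlib Require Import Reals Lra.
From Coquelicot Require Import Coquelicot.
Open Scope R_scope.

Section Flux.

Variables umax ustar ua : R.
Hypothesis umax_gt0 : 0 < umax.

Local Notation q := (g umax ustar ua).
Local Notation q' z := (/ uhat umax * (z - ustar) * (z - uhat umax)).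
Local Notation m := ((2 * ustar + umax) / 4).
Local Notation gamma := (Rmax ustar (uhat umax)).

Lemma g_derive z : is_derive q z (q' z).
Proof.
unfold g, Defs.f, F, uhat.
auto_derive; [exact I|].
field; lra.
Qed.

Lemma g_continuous : continuity q.
Proof.
intros x; apply derivable_continuous_pt.
exists (q' x); apply is_derive_Reals, g_derive.
Qed.

Lemma g_MVT a b : a < b -> exists c, a < c < b /\ q b - q a = q' c * (b - a).
Proof.
intros ab.
destruct (MVT_cor2 q (fun z => q' z) a b ab) as [c [Hqc Hc]].
- intros c _; apply is_derive_Reals, g_derive.
- exists c; split; assumption.
Qed.

Lemma g_le_right_of_max a b : gamma <= a -> a <= b -> q a <= q b.
Proof.
intros Ha [ab | <-]; [|lra].
destruct (g_MVT a b ab) as [c [Hc Hqba]].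
assert (ustar <= gamma /\ uhat umax <= gamma) by (split; [apply Rmax_l | apply Rmax_r]).
assert (0 <= / uhat umax) by (left; apply Rinv_0_lt_compat; unfold uhat; lra).
assert (0 <= (c - ustar) * (c - uhat umax)) by nra.
assert (0 <= q' c * (b - a)) by (rewrite Rmult_assoc; apply Rmult_le_pos; nra).
lra.
Qed.

Lemma g_lt_between a b :
  Rmin ustar (uhat umax) < a -> a < b -> b <= gamma -> q b < q a.
Proof.
intros Ha ab Hb.
destruct (g_MVT a b ab) as [c [Hc Hqba]].
assert (0 < / uhat umax) by (apply Rinv_0_lt_compat; unfold uhat; lra).
assert ((c - ustar) * (c - uhat umax) < 0).
{ revert Ha Hb; unfold Rmin, Rmax; destruct (Rle_dec ustar (uhat umax)); intros; nra. }
assert (q' c < 0) by (rewrite Rmult_assoc; nra).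
nra.
Qed.

(* m = (u* + û)/2. *)
Lemma midpoint_between : ustar <> uhat umax -> Rmin ustar (uhat umax) < m < gamma.
Proof.
unfold Rmin, Rmax, uhat; destruct (Rle_dec ustar (umax / 2)); intros; lra.
Qed.

Lemma midpoint_eq : ustar = uhat umax -> gamma = m.
Proof. intros E; rewrite E, Rmax_left by lra; unfold uhat; lra. Qed.

Lemma g_min_on_Cb w : m <= w <= umax -> q gamma <= q w.
Proof.
intros Hw.
destruct (Rle_lt_dec gamma w) as [Gw | wG]; [apply g_le_right_of_max; lra|].
destruct (Req_dec ustar (uhat umax)) as [E | NE].
- rewrite midpoint_eq in wG by exact E; lra.
- left; apply g_lt_between; [pose proof (midpoint_between NE)|..]; lra.
Qed.

Variable C : R.

Lemma P2_optimal_least z :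
  0 <= ustar -> P2_feasible umax ustar ua C z ->
  (forall w, P2_feasible umax ustar ua C w -> z <= w) ->
  P2_optimal umax ustar ua C z.
Proof.
intros Hs Fz least; split; [exact Fz|].
intros w Fw wz.
destruct Fz as [[Hz _] _].
assert (z < w) by (destruct (least w Fw); [assumption | congruence]).
nra.
Qed.

Lemma P2_optimal_midpoint : 0 <= ustar -> ustar <= umax -> q m <= - C ->
  P2_optimal umax ustar ua C m.
Proof.
intros Hs Hs' Hqm; apply P2_optimal_least; [exact Hs | |].
- split; [unfold in_Cb; lra | exact Hqm].
- intros w [[Hw _] _]; exact Hw.
Qed.

Lemma P2_infeasible_below_min : - C < q gamma -> P2_infeasible umax ustar ua C.
Proof.
intros HC [z [Hz Hqz]].
pose proof (g_min_on_Cb z Hz); lra.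
Qed.

Lemma P2_first_crossing : 0 <= ustar -> ustar <= umax -> ustar <> uhat umax ->
  q gamma <= - C < q m ->
  exists z, m < z <= umax /\ q z = - C /\
    (forall w, m < w <= umax -> q w = - C -> z <= w) /\
    P2_optimal umax ustar ua C z.
Proof.
intros Hs Hs' NE [HCg HCm].
pose proof (midpoint_between NE) as Hm.
assert (Gmax : gamma <= umax) by (apply Rmax_lub; unfold uhat; lra).
destruct (IVT_gen q m gamma (- C) g_continuous) as [z [Hz Hqz]].
{ rewrite Rmin_right, (Rmax_left (q m)) by lra; split; lra. }
rewrite Rmin_left, (Rmax_right m) in Hz by lra.
assert (mz : m < z) by (destruct (Req_dec z m) as [-> | ]; lra).
assert (above : forall w, m <= w < z -> - C < q w).
{ intros w Hw; rewrite <- Hqz; apply g_lt_between; lra. }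
assert (least : forall w, m <= w -> q w <= - C -> z <= w).
{ intros w Hw Hqw; destruct (Rlt_le_dec w z) as [wz | ]; [|assumption].
  pose proof (above w (conj Hw wz)); lra. }
exists z; repeat split; try lra.
- intros w Hw Hqw; apply least; lra.
- apply P2_optimal_least; [exact Hs | split; [unfold in_Cb; lra | lra] |].
  intros w [[Hw _] Hqw]; apply least; assumption.
Qed.

End Flux.

Theorem mainTheorem5 (umax ustar ua C : R) :
  0 < umax -> 0 <= ustar <= umax -> 0 <= ua <= umax -> 0 <= C ->
  let q := fun z => g umax ustar ua z in
  let m := (2 * ustar + umax) / 4 in
  let gamma := Rmax ustar (uhat umax) in
  (forall z, is_derive q z (/ uhat umax * (z - ustar) * (z - uhat umax))) /\
  (ustar <> uhat umax ->
     (q m <= - C -> P2_optimal umax ustar ua C m) /\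
     (q gamma <= - C < q m ->
        exists z, m < z <= umax /\ q z = - C /\
          (forall w, m < w <= umax -> q w = - C -> z <= w) /\
          P2_optimal umax ustar ua C z) /\
     (- C < q gamma -> P2_infeasible umax ustar ua C)) /\
  (ustar = uhat umax ->
     (q m <= - C -> P2_optimal umax ustar ua C m) /\
     (- C < q m -> P2_infeasible umax ustar ua C)).
Proof.
intros Hu [Hs Hs'] _ _ q m gamma.
pose proof (P2_optimal_midpoint umax ustar ua Hu C Hs Hs') as opt_m.
pose proof (P2_infeasible_below_min umax ustar ua Hu C) as infeasible.
split; [exact (g_derive umax ustar ua Hu)|].
split.
- intros NE; split; [exact opt_m|].
  split; [exact (P2_first_crossing umax ustar ua Hu C Hs Hs' NE) | exact infeasible].
- intros E; split; [exact opt_m|].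
  unfold q, m; rewrite <- (midpoint_eq umax ustar E); exact infeasible.
Qed.
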